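(* For every integer $n\ge 2$ and every real number $p\in(0,1)$, \[ \bigl(n^p-(n-1)^p\bigr)^{1/(1-p)}+3^{-p/(1-p)}\bigl((n-2)n^p-(n-3)(n-1)^p\bigr)^{1/(1-p)}\le (n-1)^{p/(1-p)}. \] *)

(* concrete reals R, real powers via Rpower (x^y = exp (y ln x), used only for x > 0). *)
From Stdlib Require Export Reals.

(* Write [m = n - 1], [q = 1/(1-p)] and [K = 3^(-p/(1-p))].  By the mean value
   theorem [(m+1)^p - m^p <= p m^(p-1)], which bounds both bases by [m^(p-1)]
   times [p] and [m(1+p) - p] respectively; since [(m^(p-1))^q = 1/m] it remains
   to show [p^q + K (m(1+p) - p)^q <= m^q] for [m >= 1].  At [m = 1] this is
   [p^q + K <= 1], and the difference of the two sides is nondecreasing in [m]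
   because [K (1+p)^q <= 1].  Both constant inequalities follow from
   [ln x <= x - 1] and [ln 3 >= 1]. *)
From Stdlib Require Import Reals Lra.
Open Scope R_scope.

Lemma Rpower_gt_0 x y : 0 < Rpower x y.
Proof. apply exp_pos. Qed.

Lemma Rpower_1_l y : Rpower 1 y = 1.
Proof. unfold Rpower; rewrite ln_1, Rmult_0_r; apply exp_0. Qed.

Lemma exp_le_compat x y : x <= y -> exp x <= exp y.
Proof.
  intros [hlt | ->]; [left; apply exp_increasing; exact hlt | right; reflexivity].
Qed.

Lemma ln_le_sub_1 x : 0 < x -> ln x <= x - 1.
Proof.
  intros hx. pose proof (exp_ineq1_le (ln x)) as h.
  rewrite exp_ln in h by exact hx. lra.
Qed.

Lemma ln_3_ge_1 : 1 <= ln 3.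
Proof.
  destruct (Rle_or_lt 1 (ln 3)) as [h | h]; [exact h |].
  apply exp_increasing in h. rewrite exp_ln in h by lra.
  pose proof exp_le_3. lra.
Qed.

Lemma nondecreasing_of_derivative_nonneg (f f' : R -> R) a b :
  a <= b ->
  (forall c, a <= c <= b -> derivable_pt_lim f c (f' c)) ->
  (forall c, a < c < b -> 0 <= f' c) ->
  f a <= f b.
Proof.
  intros [hab | <-] hder hpos; [| lra].
  destruct (MVT_cor2 f f' a b hab hder) as [c [hmvt hc]].
  pose proof (hpos c hc). nra.
Qed.

Lemma derivable_pt_lim_Rpower_affine a b q c :
  0 < c * a - b ->
  derivable_pt_lim (fun x => Rpower (x * a - b) q) c (q * Rpower (c * a - b) (q - 1) * a).
Proof.
  intros hc.
  assert (haff : derivable_pt_lim (fun x => x * a - b) c (1 * a - 0)).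
  { apply (derivable_pt_lim_minus (fun x => x * a) (fun _ => b)).
    - apply (derivable_pt_lim_scal_right id). apply derivable_pt_lim_id.
    - apply derivable_pt_lim_const. }
  replace (1 * a - 0) with a in haff by ring.
  exact (derivable_pt_lim_comp _ (fun y => Rpower y q) c _ _ haff
            (derivable_pt_lim_power _ q hc)).
Qed.

Lemma Rpower_succ_sub_le m p :
  0 < m -> 0 < p <= 1 ->
  0 < Rpower (m + 1) p - Rpower m p <= p * Rpower m (p - 1).
Proof.
  intros hm hp.
  destruct (MVT_cor2 (fun x => Rpower x p) (fun x => p * Rpower x (p - 1)) m (m + 1))
    as [c [hmvt hc]]; [lra | |].
  { intros c hc. apply derivable_pt_lim_power. lra. }
  rewrite hmvt. replace (m + 1 - m) with 1 by ring. rewrite Rmult_1_r.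
  split; [apply Rmult_lt_0_compat; [lra | apply Rpower_gt_0] |].
  apply Rmult_le_compat_l; [lra |].
  replace (p - 1) with (- (1 - p)) by ring. rewrite !Rpower_Ropp.
  apply Rinv_le_contravar; [apply Rpower_gt_0 |].
  apply Rle_Rpower_l; lra.
Qed.

Section ConjugateExponent.

Variable p : R.
Hypothesis hp : 0 < p < 1.

Local Notation q := (1 / (1 - p)).
Local Notation K := (Rpower 3 (- p / (1 - p))).

Lemma conj_exponent_gt_1 : 1 < q.
Proof.
  assert (h : q * (1 - p) = 1) by (field; lra). nra.
Qed.

Lemma Rpower_p_conj_exponent_add_le_1 : Rpower p q + K <= 1.
Proof.
  set (s := p / (1 - p)).
  assert (hs : p <= s).
  { unfold s. apply Rmult_le_reg_r with (1 - p); [lra |].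
    unfold Rdiv. rewrite Rmult_assoc, Rinv_l by lra. nra. }
  assert (hps : Rpower p s <= / (1 + p)).
  { apply Rle_trans with (exp (- p)).
    - apply exp_le_compat.
      replace (- p) with (s * (p - 1)) by (unfold s; field; lra).
      apply Rmult_le_compat_l; [lra |]. apply ln_le_sub_1; lra.
    - rewrite exp_Ropp. apply Rinv_le_contravar; [lra |].
      pose proof (exp_ineq1_le p). lra. }
  assert (hK : K <= / (1 + p)).
  { replace (- p / (1 - p)) with (- s) by (unfold s; field; lra).
    rewrite Rpower_Ropp. apply Rinv_le_contravar; [lra |].
    pose proof (exp_ineq1_le (s * ln 3)). pose proof ln_3_ge_1. unfold Rpower. nra. }
  replace q with (1 + s) by (unfold s; field; lra).
  rewrite Rpower_plus, Rpower_1 by lra.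
  assert (hsum : p * / (1 + p) + / (1 + p) = 1) by (field; lra).
  nra.
Qed.

Lemma K_mul_Rpower_conj_exponent_le_1 : K * Rpower (1 + p) q <= 1.
Proof.
  unfold Rpower. rewrite <- exp_plus.
  apply Rle_trans with (exp 0); [apply exp_le_compat | right; apply exp_0].
  pose proof (ln_le_sub_1 (1 + p) ltac:(lra)). pose proof ln_3_ge_1.
  assert (hq : 0 < q) by (apply Rdiv_lt_0_compat; lra).
  assert (hlog : q * ln (1 + p) <= q * p) by (apply Rmult_le_compat_l; lra).
  replace (q * p) with (p / (1 - p)) in hlog by (field; lra).
  assert (hs : 0 < p / (1 - p)) by (apply Rdiv_lt_0_compat; lra).
  replace (- p / (1 - p)) with (- (p / (1 - p))) by (field; lra).
  nra.
Qed.

Lemma K_mul_Rpower_affine_le c :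
  1 <= c -> K * (1 + p) * Rpower (c * (1 + p) - p) (q - 1) <= Rpower c (q - 1).
Proof.
  intros hc. pose proof conj_exponent_gt_1.
  assert (hbase : Rpower (c * (1 + p) - p) (q - 1) <= Rpower c (q - 1) * Rpower (1 + p) (q - 1)).
  { rewrite Rpower_mult_distr by lra. apply Rle_Rpower_l; nra. }
  assert (hKq : K * (1 + p) * Rpower (1 + p) (q - 1) <= 1).
  { replace (K * (1 + p) * Rpower (1 + p) (q - 1)) with (K * Rpower (1 + p) (1 + (q - 1)))
      by (rewrite Rpower_plus, Rpower_1 by lra; ring).
    replace (1 + (q - 1)) with q by ring. apply K_mul_Rpower_conj_exponent_le_1. }
  assert (hK1 : 0 < K * (1 + p)) by (pose proof (Rpower_gt_0 3 (- p / (1 - p))); nra).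
  pose proof (Rpower_gt_0 c (q - 1)).
  apply Rle_trans with (K * (1 + p) * (Rpower c (q - 1) * Rpower (1 + p) (q - 1))).
  - apply Rmult_le_compat_l; lra.
  - nra.
Qed.

Lemma Rpower_p_add_K_affine_le m :
  1 <= m -> Rpower p q + K * Rpower (m * (1 + p) - p) q <= Rpower m q.
Proof.
  intros hm.
  set (f x := Rpower x q - K * Rpower (x * (1 + p) - p) q).
  assert (hf1 : f 1 = 1 - K).
  { unfold f. replace (1 * (1 + p) - p) with 1 by ring. rewrite Rpower_1_l. ring. }
  assert (hmono : f 1 <= f m).
  { apply (nondecreasing_of_derivative_nonneg f
      (fun x => q * Rpower x (q - 1) - K * (q * Rpower (x * (1 + p) - p) (q - 1) * (1 + p))));
      [exact hm | |].
    - intros c hc. apply derivable_pt_lim_minus.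
      + apply derivable_pt_lim_power; lra.
      + apply derivable_pt_lim_scal, derivable_pt_lim_Rpower_affine. nra.
    - intros c hc. pose proof (K_mul_Rpower_affine_le c ltac:(lra)).
      pose proof conj_exponent_gt_1.
      replace (_ - _) with (q * (Rpower c (q - 1) - K * (1 + p) * Rpower (c * (1 + p) - p) (q - 1)))
        by ring.
      apply Rmult_le_pos; lra. }
  pose proof Rpower_p_conj_exponent_add_le_1. rewrite hf1 in hmono. unfold f in hmono. lra.
Qed.

Lemma Rpower_mul_Rpower_pred_conj_exponent a x :
  0 < a -> 0 < x -> Rpower (a * Rpower x (p - 1)) q = Rpower a q / x.
Proof.
  intros ha hx.
  rewrite <- Rpower_mult_distr, Rpower_mult by (exact ha || apply Rpower_gt_0).
  replace ((p - 1) * q) with (- (1)) by (field; lra).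
  rewrite Rpower_Ropp, Rpower_1 by exact hx. reflexivity.
Qed.

Lemma lemma6_shifted m :
  1 <= m ->
  Rpower (Rpower (m + 1) p - Rpower m p) q
  + K * Rpower ((m - 1) * Rpower (m + 1) p - (m - 2) * Rpower m p) q
  <= Rpower m (p / (1 - p)).
Proof.
  intros hm. pose proof conj_exponent_gt_1.
  destruct (Rpower_succ_sub_le m p ltac:(lra) ltac:(lra)) as [hx0 hx].
  set (x := Rpower (m + 1) p - Rpower m p) in *.
  assert (hmp : Rpower m p = m * Rpower m (p - 1)).
  { replace p with (1 + (p - 1)) at 1 by ring. rewrite Rpower_plus, Rpower_1 by lra. reflexivity. }
  pose proof (Rpower_gt_0 m (p - 1)).
  assert (hy : (m - 1) * Rpower (m + 1) p - (m - 2) * Rpower m p = (m - 1) * x + Rpower m p)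
    by (unfold x; ring).
  rewrite hy.
  assert (hxq : Rpower x q <= Rpower p q / m).
  { rewrite <- Rpower_mul_Rpower_pred_conj_exponent by lra.
    apply Rle_Rpower_l; lra. }
  assert (hyq : Rpower ((m - 1) * x + Rpower m p) q <= Rpower (m * (1 + p) - p) q / m).
  { rewrite <- Rpower_mul_Rpower_pred_conj_exponent by nra.
    apply Rle_Rpower_l; [lra |]. rewrite hmp. nra. }
  replace (p / (1 - p)) with (q + - (1)) by (field; lra).
  rewrite Rpower_plus, Rpower_Ropp, Rpower_1 by lra.
  pose proof (Rpower_p_add_K_affine_le m hm).
  pose proof (Rpower_gt_0 3 (- p / (1 - p))).
  assert (him : 0 < / m) by (apply Rinv_0_lt_compat; lra).
  unfold Rdiv in hxq, hyq. nra.
Qed.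

End ConjugateExponent.

Theorem lemma6 (n : nat) (p : R) (hn : (2 <= n)%nat) (hp0 : 0 < p) (hp1 : p < 1) :
  Rpower (Rpower (INR n) p - Rpower (INR n - 1) p) (1 / (1 - p))
  + Rpower 3 (- p / (1 - p))
    * Rpower ((INR n - 2) * Rpower (INR n) p - (INR n - 3) * Rpower (INR n - 1) p) (1 / (1 - p))
  <= Rpower (INR n - 1) (p / (1 - p)).
Proof.
  assert (hN : 2 <= INR n) by (apply le_INR in hn; simpl in hn; lra).
  pose proof (lemma6_shifted p ltac:(lra) (INR n - 1) ltac:(lra)) as h.
  replace (INR n - 1 + 1) with (INR n) in h by ring.
  replace (INR n - 1 - 1) with (INR n - 2) in h by ring.
  replace (INR n - 1 - 2) with (INR n - 3) in h by ring.
  exact h.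
Qed.
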